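(* For $n\ge3$, let $n$-Go denote the equation $a_1\overset{\gamma}{\equiv}a_n=a_n\overset{\gamma}{\equiv}a_1$. Then: (i) for every $n\ge3$, $n$-Go holds in every ortholattice that admits a strong set of states; (ii) every ortholattice satisfying $n$-Go (for any $n\ge3$) is orthomodular; (iii) for every $n\ge 3$, there is an orthomodular lattice in which $n$-Go fails.
   Context: An ortholattice (OL) is a bounded lattice with an operation $'$ satisfying $a''=a$, $a\le b\Rightarrow b'\le a'$, $a\cap a'=0$ and $a\cup a'=1$. An orthomodular lattice is an OL in which $a\le b$ implies $b=a\cup(a'\cap b)$. Write $a\to b=a'\cup(a\cap b)$ and $a\perp b$ for $a\le b'$. The Godowski identity is $$a_1\overset{\gamma}{\equiv}a_n=(a_1\to a_2)\cap(a_2\to a_3)\cap\cdots\cap(a_{n-1}\to a_n)\cap(a_n\to a_1),$$ and $$a_n\overset{\gamma}{\equiv}a_1=(a_n\to a_{n-1})\cap(a_{n-1}\to a_{n-2})\cap\cdots\cap(a_2\to a_1)\cap(a_1\to a_n).$$ A state on an OL $L$ is a map $m:L\to[0,1]$ with $m(1)=1$ and $a\perp b\Rightarrow m(a\cup b)=m(a)+m(b)$. $L$ admits a strong set of states if there is a nonempty set $S$ of states such that for all $a,b\in L$ with $a\not\le b$ some $m\in S$ has $m(a)=1$ and $m(b)\neq1$. *)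

From Stdlib Require Import Reals.
Open Scope R_scope.

Record OL := {
  carrier :> Type;
  meet : carrier -> carrier -> carrier;
  join : carrier -> carrier -> carrier;
  compl : carrier -> carrier;
  zero : carrier;
  one : carrier;
  meetC : forall a b, meet a b = meet b a;
  joinC : forall a b, join a b = join b a;
  meetA : forall a b c, meet a (meet b c) = meet (meet a b) c;
  joinA : forall a b c, join a (join b c) = join (join a b) c;
  meet_join_absorb : forall a b, meet a (join a b) = a;
  join_meet_absorb : forall a b, join a (meet a b) = a;
  meet0 : forall a, meet zero a = zero;
  join1 : forall a, join one a = one;
  complK : forall a, compl (compl a) = a;
  compl_anti : forall a b, meet a b = a -> meet (compl b) (compl a) = compl b;
  meet_compl : forall a, meet a (compl a) = zero;
  join_compl : forall a, join a (compl a) = one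
}.

Arguments meet {o}.
Arguments join {o}.
Arguments compl {o}.
Arguments zero {o}.
Arguments one {o}.

Definition ole {L : OL} (a b : L) : Prop := meet a b = a.

Definition orth {L : OL} (a b : L) : Prop := ole a (compl b).

Definition orthomodular (L : OL) : Prop :=
  forall a b : L, ole a b -> b = join a (meet (compl a) b).

Definition imp {L : OL} (a b : L) : L := join (compl a) (meet a b).

(* Variables a_1, ..., a_n are represented by a 0, ..., a (n-1). *)
Fixpoint chain_fwd {L : OL} (a : nat -> L) (k : nat) : L :=
  match k with
  | O => one
  | S k' => meet (chain_fwd a k') (imp (a k') (a k))
  end.

Fixpoint chain_bwd {L : OL} (a : nat -> L) (k : nat) : L :=
  match k with
  | O => one
  | S k' => meet (chain_bwd a k') (imp (a k) (a k'))
  end.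

(* a_1 ==gamma a_n = (a1->a2) /\ ... /\ (a(n-1)->an) /\ (an->a1) *)
Definition go_fwd {L : OL} (n : nat) (a : nat -> L) : L :=
  meet (chain_fwd a (n - 1)) (imp (a (n - 1)%nat) (a O)).

(* a_n ==gamma a_1 = (an->a(n-1)) /\ ... /\ (a2->a1) /\ (a1->an) *)
Definition go_bwd {L : OL} (n : nat) (a : nat -> L) : L :=
  meet (chain_bwd a (n - 1)) (imp (a O) (a (n - 1)%nat)).

Definition satisfies_Go (n : nat) (L : OL) : Prop :=
  forall a : nat -> L, go_fwd n a = go_bwd n a.

Definition is_state {L : OL} (m : L -> R) : Prop :=
  (forall x, 0 <= m x <= 1) /\
  m one = 1 /\
  (forall a b, orth a b -> m (join a b) = m a + m b).

Definition admits_strong_states (L : OL) : Prop :=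
  exists S : (L -> R) -> Prop,
    (exists m, S m) /\
    (forall m, S m -> is_state m) /\
    (forall a b : L, ~ ole a b -> exists m, S m /\ m a = 1 /\ m b <> 1).

From Stdlib Require Import Reals Lia Lra List Bool Classical.
Import ListNotations.

(* If a state m gives value 1 to a_1 =gamma= a_n, it gives
   value 1 to every implication a_k -> a_(k+1) and to a_n -> a_1; since
   m(a -> b) = 1 forces m(a) <= m(b), the values m(a_k) increase along a cycle
   and hence are all equal, and then every reversed implication also gets
   value 1.  A strong set of states turns "m x = 1 implies m y = 1 for every
   m" into x <= y, so both sides of n-Go are below each other.
   (ii) Orthomodularity.  For a <= b, the instance a_1 = 1, a_2 = b',
   a_3 = ... = a_n = a' of n-Go collapses to b' = a' /\ (a \/ b'), whose
   orthocomplement is the orthomodular law b = a \/ (a' /\ b).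
   (iii) Counterexample.  A Greechie lattice with 16 atoms and 9 three-atom
   blocks is orthomodular but violates n-Go on the same three-point
   sequences. *)

Section OLTheory.
Variable L : OL.

Lemma meet_idem (a : L) : meet a a = a.
Proof. rewrite <- (join_meet_absorb L a a) at 2. apply meet_join_absorb. Qed.

Lemma ole_refl (a : L) : ole a a.
Proof. apply meet_idem. Qed.

Lemma ole_trans (a b c : L) : ole a b -> ole b c -> ole a c.
Proof. unfold ole; intros Hab Hbc. rewrite <- Hab, <- meetA, Hbc. reflexivity. Qed.

Lemma ole_antisym (a b : L) : ole a b -> ole b a -> a = b.
Proof. unfold ole; intros Hab Hba. rewrite <- Hab, meetC. exact Hba. Qed.

Lemma meet_lb1 (a b : L) : ole (meet a b) a.
Proof. unfold ole. rewrite (meetC _ a b), <- meetA, meet_idem. reflexivity. Qed.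

Lemma meet_lb2 (a b : L) : ole (meet a b) b.
Proof. unfold ole. rewrite <- meetA, meet_idem. reflexivity. Qed.

Lemma meet_glb (a b c : L) : ole c a -> ole c b -> ole c (meet a b).
Proof. unfold ole; intros Ha Hb. rewrite meetA, Ha, Hb. reflexivity. Qed.

Lemma ole_one (a : L) : ole a one.
Proof.
  unfold ole. rewrite <- (join1 L a), joinC at 1. apply meet_join_absorb.
Qed.

Lemma meet_one (a : L) : meet a one = a.
Proof. apply ole_one. Qed.

Lemma meet_one_l (a : L) : meet one a = a.
Proof. rewrite meetC. apply meet_one. Qed.

Lemma join_zero_l (a : L) : join zero a = a.
Proof. rewrite <- (meet0 L a) at 1. rewrite joinC, meetC. apply join_meet_absorb. Qed.

Lemma compl_one : compl (one : L) = zero.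
Proof. rewrite <- (meet_compl L one), meet_one_l. reflexivity. Qed.

Lemma ole_join (a b : L) : ole a b <-> join a b = b.
Proof.
  unfold ole; split; intro H.
  - rewrite <- H, joinC, meetC. apply join_meet_absorb.
  - rewrite <- H. apply meet_join_absorb.
Qed.

Lemma join_lub (a b c : L) : ole a c -> ole b c -> ole (join a b) c.
Proof. rewrite !ole_join; intros Ha Hb. rewrite <- joinA, Hb, Ha. reflexivity. Qed.

(* The De Morgan laws, from antitonicity and involutivity of ' . *)
Lemma compl_join (a b : L) : compl (join a b) = meet (compl a) (compl b).
Proof.
  apply ole_antisym.
  - apply meet_glb; apply compl_anti; [|rewrite joinC]; apply meet_join_absorb.
  - rewrite <- (complK L (meet (compl a) (compl b))).
    apply compl_anti, join_lub.
    + rewrite <- (complK L a) at 1. apply compl_anti, meet_lb1.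
    + rewrite <- (complK L b) at 1. apply compl_anti, meet_lb2.
Qed.

Lemma compl_meet (a b : L) : compl (meet a b) = join (compl a) (compl b).
Proof.
  rewrite <- (complK L (join (compl a) (compl b))), compl_join, !complK.
  reflexivity.
Qed.

Lemma imp_same (a : L) : imp a a = one.
Proof. unfold imp. rewrite meet_idem, joinC. apply join_compl. Qed.

End OLTheory.

(* Three-point instances of n-Go: the sequence x, y, z, z, ..., z.  Trailing
   repetitions contribute only the trivial implications z -> z = 1. *)
Definition s3 {L : OL} (x y z : L) (k : nat) : L :=
  match k with O => x | 1 => y | _ => z end.

Lemma s3_tail {L : OL} (x y z : L) k : (2 <= k)%nat -> s3 x y z k = z.
Proof. intro Hk. destruct k as [|[|k]]; [lia | lia | reflexivity]. Qed.

Lemma chain_fwd_s3 {L : OL} (x y z : L) k : (2 <= k)%nat ->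
  chain_fwd (s3 x y z) k = meet (meet one (imp x y)) (imp y z).
Proof.
  induction k as [|k IH]; intro Hk; [lia|].
  destruct (Nat.eq_dec k 1) as [->|Hk1]; [reflexivity|].
  cbn [chain_fwd]. rewrite IH, (s3_tail x y z k), (s3_tail x y z (S k)), imp_same, meet_one by lia.
  reflexivity.
Qed.

Lemma chain_bwd_s3 {L : OL} (x y z : L) k : (2 <= k)%nat ->
  chain_bwd (s3 x y z) k = meet (meet one (imp y x)) (imp z y).
Proof.
  induction k as [|k IH]; intro Hk; [lia|].
  destruct (Nat.eq_dec k 1) as [->|Hk1]; [reflexivity|].
  cbn [chain_bwd]. rewrite IH, (s3_tail x y z k), (s3_tail x y z (S k)), imp_same, meet_one by lia.
  reflexivity.
Qed.

Lemma go_fwd_s3 {L : OL} n (x y z : L) : (3 <= n)%nat ->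
  go_fwd n (s3 x y z) = meet (meet (meet one (imp x y)) (imp y z)) (imp z x).
Proof. intro Hn. unfold go_fwd. rewrite chain_fwd_s3, (s3_tail x y z (n - 1)) by lia. reflexivity. Qed.

Lemma go_bwd_s3 {L : OL} n (x y z : L) : (3 <= n)%nat ->
  go_bwd n (s3 x y z) = meet (meet (meet one (imp y x)) (imp z y)) (imp x z).
Proof. intro Hn. unfold go_bwd. rewrite chain_bwd_s3, (s3_tail x y z (n - 1)) by lia. reflexivity. Qed.

(* Part (ii): for a <= b, n-Go at 1, b', a', ..., a' reads
   b' = a' /\ (a \/ b'), the orthocomplement of the orthomodular law. *)
Lemma Go_orthomodular (L : OL) n : (3 <= n)%nat -> satisfies_Go n L -> orthomodular L.
Proof.
  intros Hn HGo a b Hab.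
  assert (Hba : ole (compl b) (compl a)) by (apply compl_anti; exact Hab).
  pose proof (HGo (s3 one (compl b) (compl a))) as H.
  rewrite go_fwd_s3, go_bwd_s3 in H by exact Hn.
  unfold imp in H.
  rewrite !compl_one, !meet_one_l, !meet_one, !complK, !join_zero_l, Hba,
    !join_compl, meet_one, meet_one_l, meet_one, (meetC L (compl a)), Hba in H.
  apply (f_equal compl) in H.
  rewrite complK, compl_meet, compl_join, !complK in H.
  rewrite joinC. exact H.
Qed.

Lemma cyclic_chain_const (f : nat -> R) (N : nat) :
  (forall k, (k < N)%nat -> f k <= f (S k)) -> f N <= f O ->
  forall k, (k <= N)%nat -> f k = f O.
Proof.
  intros Hstep Hclose.
  assert (Hmono : forall j k, (k <= j)%nat -> (j <= N)%nat -> f k <= f j).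
  { induction j as [|j IH]; intros k Hkj HjN.
    - replace k with O by lia. lra.
    - destruct (Nat.eq_dec k (S j)) as [->|Hne]; [lra|].
      specialize (IH k ltac:(lia) ltac:(lia)). specialize (Hstep j ltac:(lia)). lra. }
  intros k Hk. pose proof (Hmono k O ltac:(lia) Hk). pose proof (Hmono N k Hk ltac:(lia)).
  lra.
Qed.

Section States.
Variables (L : OL) (m : L -> R).
Hypothesis Hm : is_state m.

Lemma state_compl (a : L) : m a + m (compl a) = 1.
Proof.
  destruct Hm as [_ [Hone Hadd]].
  rewrite <- Hadd, join_compl; [exact Hone|].
  unfold orth. rewrite complK. apply ole_refl.
Qed.

Lemma state_mono (a b : L) : ole a b -> m a <= m b.
Proof.
  intro Hab. destruct Hm as [Hrange [_ Hadd]].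
  assert (Horth : orth a (compl b)) by (unfold orth; rewrite complK; exact Hab).
  pose proof (Hadd _ _ Horth). pose proof (Hrange (join a (compl b))).
  pose proof (state_compl b). lra.
Qed.

Lemma state_le_one (a b : L) : ole a b -> m a = 1 -> m b = 1.
Proof.
  intros Hab Ha. pose proof (state_mono _ _ Hab). destruct Hm as [Hrange _].
  specialize (Hrange b). lra.
Qed.

(* a -> b is the orthogonal join of a' and a /\ b. *)
Lemma state_imp (a b : L) : m (imp a b) = 1 - m a + m (meet a b).
Proof.
  destruct Hm as [_ [_ Hadd]]. unfold imp. rewrite Hadd.
  - pose proof (state_compl a). lra.
  - unfold orth. apply compl_anti, meet_lb1.
Qed.

Lemma state_imp_le (a b : L) : m (imp a b) = 1 -> m a <= m b.
Proof.
  intro H. rewrite state_imp in H. pose proof (state_mono _ _ (meet_lb2 L a b)). lra.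
Qed.

Lemma state_imp_swap (a b : L) : m (imp a b) = 1 -> m a = m b -> m (imp b a) = 1.
Proof. intros H Heq. rewrite state_imp in *. rewrite meetC. lra. Qed.

End States.

Fixpoint conj_upto {L : OL} (f : nat -> L) (K : nat) : L :=
  match K with
  | O => one
  | S K' => meet (conj_upto f K') (f K')
  end.

Lemma chain_fwd_conj {L : OL} (a : nat -> L) K :
  chain_fwd a K = conj_upto (fun k => imp (a k) (a (S k))) K.
Proof. induction K as [|K IH]; simpl; [|rewrite IH]; reflexivity. Qed.

Lemma chain_bwd_conj {L : OL} (a : nat -> L) K :
  chain_bwd a K = conj_upto (fun k => imp (a (S k)) (a k)) K.
Proof. induction K as [|K IH]; simpl; [|rewrite IH]; reflexivity. Qed.

Lemma conj_upto_le {L : OL} (f : nat -> L) K k : (k < K)%nat -> ole (conj_upto f K) (f k).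
Proof.
  induction K as [|K IH]; intro Hk; [lia|].
  simpl. destruct (Nat.eq_dec k K) as [->|Hne].
  - apply meet_lb2.
  - eapply ole_trans; [apply meet_lb1|]. apply IH. lia.
Qed.

Lemma conj_upto_glb {L : OL} (f : nat -> L) (x : L) K :
  (forall k, (k < K)%nat -> ole x (f k)) -> ole x (conj_upto f K).
Proof.
  induction K as [|K IH]; intro H; simpl.
  - apply ole_one.
  - apply meet_glb; [apply IH; intros k Hk; apply H | apply H]; lia.
Qed.

Definition fwd_certain {L : OL} (m : L -> R) n (a : nat -> L) : Prop :=
  (forall k, (k < n - 1)%nat -> m (imp (a k) (a (S k))) = 1) /\
  m (imp (a (n - 1)%nat) (a O)) = 1.

Definition bwd_certain {L : OL} (m : L -> R) n (a : nat -> L) : Prop :=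
  (forall k, (k < n - 1)%nat -> m (imp (a (S k)) (a k)) = 1) /\
  m (imp (a O) (a (n - 1)%nat)) = 1.

Lemma go_fwd_certain {L : OL} (m : L -> R) n (a : nat -> L) :
  is_state m -> m (go_fwd n a) = 1 -> fwd_certain m n a.
Proof.
  intros Hm Hgo. split.
  - intros k Hk. apply (state_le_one L m Hm (go_fwd n a)); [|exact Hgo].
    eapply ole_trans; [apply meet_lb1|].
    rewrite chain_fwd_conj. apply (conj_upto_le (fun k => imp (a k) (a (S k)))), Hk.
  - exact (state_le_one L m Hm _ _ (meet_lb2 _ _ _) Hgo).
Qed.

Lemma go_bwd_certain {L : OL} (m : L -> R) n (a : nat -> L) :
  is_state m -> m (go_bwd n a) = 1 -> bwd_certain m n a.
Proof.
  intros Hm Hgo. split.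
  - intros k Hk. apply (state_le_one L m Hm (go_bwd n a)); [|exact Hgo].
    eapply ole_trans; [apply meet_lb1|].
    rewrite chain_bwd_conj. apply (conj_upto_le (fun k => imp (a (S k)) (a k))), Hk.
  - exact (state_le_one L m Hm _ _ (meet_lb2 _ _ _) Hgo).
Qed.

(* Around a certain cycle all a_k have the same value, so the reversed
   implications are certain as well. *)
Lemma fwd_certain_bwd {L : OL} (m : L -> R) n (a : nat -> L) :
  is_state m -> fwd_certain m n a -> bwd_certain m n a.
Proof.
  intros Hm [Hsteps Hclose].
  assert (Hval := cyclic_chain_const (fun k => m (a k)) (n - 1)
    (fun k Hk => state_imp_le L m Hm _ _ (Hsteps k Hk))
    (state_imp_le L m Hm _ _ Hclose)).
  cbv beta in Hval. split.
  - intros k Hk. apply (state_imp_swap L m Hm); [apply Hsteps, Hk|].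
    rewrite (Hval k), (Hval (S k)) by lia. reflexivity.
  - apply (state_imp_swap L m Hm); [exact Hclose|].
    rewrite (Hval (n - 1)%nat) by lia. reflexivity.
Qed.

Lemma bwd_certain_fwd {L : OL} (m : L -> R) n (a : nat -> L) :
  is_state m -> bwd_certain m n a -> fwd_certain m n a.
Proof.
  intros Hm [Hsteps Hclose].
  assert (Hval := cyclic_chain_const (fun k => - m (a k)) (n - 1)
    (fun k Hk => Ropp_le_contravar _ _ (state_imp_le L m Hm _ _ (Hsteps k Hk)))
    (Ropp_le_contravar _ _ (state_imp_le L m Hm _ _ Hclose))).
  cbv beta in Hval. split.
  - intros k Hk. apply (state_imp_swap L m Hm); [apply Hsteps, Hk|].
    pose proof (Hval k ltac:(lia)). pose proof (Hval (S k) ltac:(lia)). lra.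
  - apply (state_imp_swap L m Hm); [exact Hclose|].
    pose proof (Hval (n - 1)%nat ltac:(lia)). lra.
Qed.

Section StrongStates.
Variables (L : OL) (St : (L -> R) -> Prop).
Hypothesis St_states : forall m, St m -> is_state m.
Hypothesis St_strong : forall a b : L, ~ ole a b -> exists m, St m /\ m a = 1 /\ m b <> 1.

Lemma strong_le (x y : L) : (forall m, St m -> m x = 1 -> m y = 1) -> ole x y.
Proof.
  intro H. apply NNPP. intro Hxy.
  destruct (St_strong _ _ Hxy) as [m [Hm [Hx Hy]]]. exact (Hy (H m Hm Hx)).
Qed.

Lemma le_go_fwd (x : L) n (a : nat -> L) :
  (forall m, St m -> m x = 1 -> fwd_certain m n a) -> ole x (go_fwd n a).
Proof.
  intro H. apply meet_glb.
  - rewrite chain_fwd_conj. apply conj_upto_glb. intros k Hk.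
    apply strong_le. intros m Hm Hx. apply (H m Hm Hx), Hk.
  - apply strong_le. intros m Hm Hx. apply (H m Hm Hx).
Qed.

Lemma le_go_bwd (x : L) n (a : nat -> L) :
  (forall m, St m -> m x = 1 -> bwd_certain m n a) -> ole x (go_bwd n a).
Proof.
  intro H. apply meet_glb.
  - rewrite chain_bwd_conj. apply conj_upto_glb. intros k Hk.
    apply strong_le. intros m Hm Hx. apply (H m Hm Hx), Hk.
  - apply strong_le. intros m Hm Hx. apply (H m Hm Hx).
Qed.

Lemma strong_states_Go n : satisfies_Go n L.
Proof.
  intro a. apply ole_antisym.
  - apply le_go_bwd. intros m Hm Hgo.
    apply fwd_certain_bwd, go_fwd_certain; auto.
  - apply le_go_fwd. intros m Hm Hgo.
    apply bwd_certain_fwd, go_bwd_certain; auto.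
Qed.

End StrongStates.

Section OrthoposetOL.
Variables (T : Type) (le : T -> T -> bool) (glb : T -> T -> T) (oc : T -> T)
  (bot top : T).
Hypotheses
  (le_refl : forall a, le a a = true)
  (le_antisym : forall a b, le a b = true -> le b a = true -> a = b)
  (le_trans : forall a b c, le a b = true -> le b c = true -> le a c = true)
  (glb_lb1 : forall a b, le (glb a b) a = true)
  (glb_lb2 : forall a b, le (glb a b) b = true)
  (glb_great : forall a b c, le c a = true -> le c b = true -> le c (glb a b) = true)
  (bot_le : forall a, le bot a = true)
  (le_top : forall a, le a top = true)
  (oc_inv : forall a, oc (oc a) = a)
  (oc_anti : forall a b, le a b = true -> le (oc b) (oc a) = true)
  (glb_oc : forall a, glb a (oc a) = bot).

Definition lub (a b : T) : T := oc (glb (oc a) (oc b)).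

Lemma glb_of_le a b : le a b = true -> glb a b = a.
Proof. intro Hab. apply le_antisym; [apply glb_lb1 | apply glb_great; auto]. Qed.

Lemma le_of_glb a b : glb a b = a -> le a b = true.
Proof. intro H. rewrite <- H. apply glb_lb2. Qed.

Lemma lub_ub1 a b : le a (lub a b) = true.
Proof. unfold lub. rewrite <- (oc_inv a) at 1. apply oc_anti, glb_lb1. Qed.

Lemma glbC a b : glb a b = glb b a.
Proof. apply le_antisym; apply glb_great; auto. Qed.

Lemma glbA a b c : glb a (glb b c) = glb (glb a b) c.
Proof.
  apply le_antisym; repeat apply glb_great;
    eauto using le_trans, glb_lb1, glb_lb2.
Qed.

Lemma lubC a b : lub a b = lub b a.
Proof. unfold lub. rewrite glbC. reflexivity. Qed.

Lemma lubA a b c : lub a (lub b c) = lub (lub a b) c.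
Proof. unfold lub. rewrite !oc_inv, glbA. reflexivity. Qed.

Lemma glb_lub_absorb a b : glb a (lub a b) = a.
Proof. apply glb_of_le, lub_ub1. Qed.

Lemma lub_glb_absorb a b : lub a (glb a b) = a.
Proof.
  unfold lub. rewrite glb_of_le, oc_inv; [reflexivity|].
  apply oc_anti, glb_lb1.
Qed.

Lemma glb_bot a : glb bot a = bot.
Proof. apply glb_of_le, bot_le. Qed.

Lemma lub_top a : lub top a = top.
Proof. apply le_antisym; [apply le_top | apply lub_ub1]. Qed.

Lemma oc_anti_glb a b : glb a b = a -> glb (oc b) (oc a) = oc b.
Proof. intro H. apply glb_of_le, oc_anti, le_of_glb, H. Qed.

Lemma lub_oc a : lub a (oc a) = top.
Proof.
  unfold lub. rewrite oc_inv, glbC, glb_oc.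
  apply le_antisym; [apply le_top|].
  rewrite <- (oc_inv top) at 1. apply oc_anti, bot_le.
Qed.

Definition orthoposet_OL : OL := {|
  carrier := T; meet := glb; join := lub; compl := oc; zero := bot; one := top;
  meetC := glbC; joinC := lubC; meetA := glbA; joinA := lubA;
  meet_join_absorb := glb_lub_absorb; join_meet_absorb := lub_glb_absorb;
  meet0 := glb_bot; join1 := lub_top; complK := oc_inv;
  compl_anti := oc_anti_glb; meet_compl := glb_oc; join_compl := lub_oc |}.

End OrthoposetOL.

Section FiniteChecks.
Variables (T : Type) (enum : list T).
Hypothesis enum_complete : forall x : T, In x enum.

Lemma check1 (P : T -> bool) : forallb P enum = true -> forall a, P a = true.
Proof. intros H a. rewrite forallb_forall in H. apply H, enum_complete. Qed.

Lemma check2 (P : T -> T -> bool) :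
  forallb (fun a => forallb (P a) enum) enum = true -> forall a b, P a b = true.
Proof. intros H a. apply check1, (check1 _ H a). Qed.

Lemma check3 (P : T -> T -> T -> bool) :
  forallb (fun a => forallb (fun b => forallb (P a b) enum) enum) enum = true ->
  forall a b c, P a b c = true.
Proof. intros H a b. apply check1, (check2 _ H a b). Qed.

Variable le : T -> T -> bool.

Definition is_glb (a b c : T) : bool :=
  le c a && le c b && forallb (fun d => implb (le d a && le d b) (le d c)) enum.

Definition find_glb (dflt a b : T) : T :=
  match find (is_glb a b) enum with Some c => c | None => dflt end.

Lemma find_glb_spec dflt a b :
  find (is_glb a b) enum <> None ->
  le (find_glb dflt a b) a = true /\ le (find_glb dflt a b) b = true /\
  forall d, le d a = true -> le d b = true -> le d (find_glb dflt a b) = true.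
Proof.
  unfold find_glb. destruct (find (is_glb a b) enum) as [c|] eqn:Hfind;
    [intros _ | contradiction].
  apply find_some in Hfind as [_ Hc]. unfold is_glb in Hc.
  apply andb_prop in Hc as [Hc Hall]. apply andb_prop in Hc as [Hca Hcb].
  rewrite forallb_forall in Hall.
  repeat split; auto. intros d Hda Hdb.
  specialize (Hall d (enum_complete d)). rewrite Hda, Hdb in Hall. exact Hall.
Qed.

End FiniteChecks.

(* The counterexample: the orthomodular lattice of the Greechie diagram with
   atoms A0..A15 and the nine blocks below; two distinct atoms are orthogonal
   iff they lie in a common block.  Its elements are 0, 1, the atoms At x and
   their orthocomplements (coatoms) Co x, with At x <= Co y iff x is
   orthogonal to y. *)
Inductive atom := A0 | A1 | A2 | A3 | A4 | A5 | A6 | A7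
                | A8 | A9 | A10 | A11 | A12 | A13 | A14 | A15.
Scheme Equality for atom.

Definition atoms : list atom :=
  [A0; A1; A2; A3; A4; A5; A6; A7; A8; A9; A10; A11; A12; A13; A14; A15].

Definition blocks : list (atom * atom * atom) :=
  [(A0, A1, A2); (A0, A4, A6); (A2, A5, A11); (A3, A5, A15); (A4, A10, A15);
   (A6, A7, A8); (A7, A9, A12); (A9, A13, A15); (A11, A12, A14)].

Definition in_block (x : atom) (blk : atom * atom * atom) : bool :=
  let '(p, q, r) := blk in atom_beq x p || atom_beq x q || atom_beq x r.

Definition atom_orth (x y : atom) : bool :=
  negb (atom_beq x y) && existsb (fun blk => in_block x blk && in_block y blk) blocks.

Inductive elt := Bot | Top | At (x : atom) | Co (x : atom).
Scheme Equality for elt.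

Definition elts : list elt := Bot :: Top :: map At atoms ++ map Co atoms.

Lemma elts_complete x : In x elts.
Proof.
  destruct x as [| |x|x]; [now left | right; now left | |];
    destruct x; simpl; tauto.
Qed.

Definition elt_le (a b : elt) : bool :=
  match a, b with
  | Bot, _ | _, Top => true
  | At x, At y | Co x, Co y => atom_beq x y
  | At x, Co y => atom_orth x y
  | _, _ => false
  end.

Definition elt_compl (a : elt) : elt :=
  match a with Bot => Top | Top => Bot | At x => Co x | Co x => At x end.

Definition elt_meet : elt -> elt -> elt := find_glb elt elts elt_le Bot.

Definition elt_eqb (a b : elt) : bool := if elt_eq_dec a b then true else false.

Lemma elt_eqb_eq a b : elt_eqb a b = true -> a = b.
Proof. unfold elt_eqb. destruct (elt_eq_dec a b); easy. Qed.

Lemma implb_mp (b c : bool) : implb b c = true -> b = true -> c = true.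
Proof. intros H ->. exact H. Qed.

Lemma elt_le_refl a : elt_le a a = true.
Proof. destruct a as [| |x|x]; try destruct x; reflexivity. Qed.

Lemma elt_le_antisym a b : elt_le a b = true -> elt_le b a = true -> a = b.
Proof.
  intros Hab Hba. apply elt_eqb_eq.
  refine (implb_mp _ _ (check2 _ _ elts_complete
    (fun a b => implb (elt_le a b && elt_le b a) (elt_eqb a b)) _ a b) _).
  - vm_compute. reflexivity.
  - rewrite Hab, Hba. reflexivity.
Qed.

Lemma elt_le_trans a b c : elt_le a b = true -> elt_le b c = true -> elt_le a c = true.
Proof.
  intros Hab Hbc.
  refine (implb_mp _ _ (check3 _ _ elts_complete
    (fun a b c => implb (elt_le a b && elt_le b c) (elt_le a c)) _ a b c) _).
  - vm_compute. reflexivity.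
  - rewrite Hab, Hbc. reflexivity.
Qed.

Lemma elt_meet_spec a b :
  elt_le (elt_meet a b) a = true /\ elt_le (elt_meet a b) b = true /\
  forall d, elt_le d a = true -> elt_le d b = true -> elt_le d (elt_meet a b) = true.
Proof.
  apply (find_glb_spec _ _ elts_complete).
  assert (Hex := check2 _ _ elts_complete
    (fun a b => match find (is_glb elt elts elt_le a b) elts with Some _ => true | None => false end)
    ltac:(vm_compute; reflexivity) a b).
  cbv beta in Hex. intro Hnone. rewrite Hnone in Hex. discriminate Hex.
Qed.

Lemma elt_compl_inv a : elt_compl (elt_compl a) = a.
Proof. destruct a; reflexivity. Qed.

Lemma elt_compl_anti a b : elt_le a b = true -> elt_le (elt_compl b) (elt_compl a) = true.
Proof.
  apply implb_mp, (check2 _ _ elts_complete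
    (fun a b => implb (elt_le a b) (elt_le (elt_compl b) (elt_compl a)))).
  vm_compute. reflexivity.
Qed.

Lemma elt_meet_compl a : elt_meet a (elt_compl a) = Bot.
Proof.
  apply elt_eqb_eq, (check1 _ _ elts_complete
    (fun a => elt_eqb (elt_meet a (elt_compl a)) Bot)).
  vm_compute. reflexivity.
Qed.

Definition greechie : OL :=
  orthoposet_OL elt elt_le elt_meet elt_compl Bot Top
    elt_le_refl elt_le_antisym elt_le_trans
    (fun a b => proj1 (elt_meet_spec a b))
    (fun a b => proj1 (proj2 (elt_meet_spec a b)))
    (fun a b c => proj2 (proj2 (elt_meet_spec a b)) c)
    (fun a => eq_refl) (fun a => ltac:(destruct a; reflexivity))
    elt_compl_inv elt_compl_anti elt_meet_compl.

Lemma greechie_orthomodular : orthomodular greechie.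
Proof.
  intros a b Hab. apply elt_eqb_eq.
  refine (implb_mp _ _ (check2 _ _ elts_complete
    (fun a b => implb (elt_le a b)
       (elt_eqb b (@join greechie a (@meet greechie (@compl greechie a) b)))) _ a b) _).
  - vm_compute. reflexivity.
  - rewrite <- Hab. apply (elt_meet_spec a b).
Qed.
(* With a_1 = A0', a_2 = A7', a_3 = ... = a_n = A11', the left side of n-Go is
   the atom A15 while the right side is 0. *)
Lemma greechie_not_Go n : (3 <= n)%nat -> ~ satisfies_Go n greechie.
Proof.
  intros Hn HGo. specialize (HGo (s3 (L := greechie) (Co A0) (Co A7) (Co A11))).
  rewrite go_fwd_s3, go_bwd_s3 in HGo by exact Hn.
  vm_compute in HGo. discriminate HGo.
Qed.

Theorem theorem5p6 :
  (forall (n : nat), (3 <= n)%nat ->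
     forall L : OL, admits_strong_states L -> satisfies_Go n L) /\
  (forall (n : nat), (3 <= n)%nat ->
     forall L : OL, satisfies_Go n L -> orthomodular L) /\
  (forall (n : nat), (3 <= n)%nat ->
     exists L : OL, orthomodular L /\ ~ satisfies_Go n L).
Proof.
  split; [|split].
  - intros n _ L [St [_ [St_states St_strong]]].
    exact (strong_states_Go L St St_states St_strong n).
  - intros n Hn L. exact (Go_orthomodular L n Hn).
  - intros n Hn. exists greechie.
    exact (conj greechie_orthomodular (greechie_not_Go n Hn)).
Qed.
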